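(* Let $w$ be an instance of MAXCUT on $n$ vertices and let $(S,\bar S)$ be a maximal cut of $w$ with $\xi(x)\ge\gamma\,\iota(x)$ for every vertex $x$, where $\gamma>\frac{2}{1-\sqrt{1-h(w_{cut})^2}}$. Then the matrix $W+D'$ is positive semidefinite of rank $n-1$.
   Context: An instance of MAXCUT is a vertex set $V=\{1,\dots,n\}$ with a symmetric $w:V\times V\to[0,\infty)$ with zero diagonal and connected support; $W$ is the matrix $W_{ij}=w(i,j)$. A cut $(S,\bar S)$ is maximal if $\sum_{a\in S,b\in\bar S}w(a,b)$ is maximum. For the cut: $\xi(x)$ is the total weight of edges at $x$ crossing the cut, $\iota(x)$ the total weight of edges at $x$ not crossing it. $w_{cut}(u,v)=w(u,v)$ if $u,v$ are on opposite sides of the cut and $0$ otherwise; $w_{uncut}=w-w_{cut}$; $W^{cut},W^{uncut}$ are the corresponding matrices. $D^{cut},D^{uncut}$ are diagonal with $D^{cut}_{ii}=\sum_jW^{cut}_{ij}$, $D^{uncut}_{ii}=\sum_jW^{uncut}_{ij}$, and $D'=D^{cut}-D^{uncut}$. For a weight function $u$, $\tau_u(A)=\sum_{a\in A,b\notin A}u(a,b)$, $\mu_u(A)=\sum_{a\in A,v\in V}u(a,v)$ and the Cheeger constant is $h(u)=\min_{\emptyset\ne A\subsetneq V}\frac{\tau_u(A)}{\min\{\mu_u(A),\mu_u(\bar A)\}}$. *)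

From HB Require Import structures.
From mathcomp Require Import all_boot all_order all_algebra.
Set Implicit Arguments. Unset Strict Implicit. Unset Printing Implicit Defensive.
Import Order.TTheory GRing.Theory Num.Theory.
Local Open Scope ring_scope.

Section Defs.
Variables (R : rcfType) (n : nat).
Implicit Types (W : 'M[R]_n) (S A : {set 'I_n}).

Definition maxcut_instance W : Prop :=
  [/\ forall i j, W i j = W j i,
      forall i j, 0 <= W i j,
      forall i, W i i = 0 &
      forall i j, connect (fun a b => 0 < W a b) i j].

Definition cut_value W S : R := \sum_(a in S) \sum_(b in ~: S) W a b.

Definition is_max_cut W S : Prop := forall T, cut_value W T <= cut_value W S.

Definition crosses S (i j : 'I_n) : bool := (i \in S) != (j \in S).

Definition Wcut W S : 'M[R]_n := \matrix_(i, j) (if crosses S i j then W i j else 0).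
Definition Wuncut W S : 'M[R]_n := W - Wcut W S.

Definition xi W S (x : 'I_n) : R := \sum_j Wcut W S x j.
Definition iota_w W S (x : 'I_n) : R := \sum_j Wuncut W S x j.

Definition Dcut W S : 'M[R]_n := diag_mx (\row_i \sum_j Wcut W S i j).
Definition Duncut W S : 'M[R]_n := diag_mx (\row_i \sum_j Wuncut W S i j).
Definition Dprime W S : 'M[R]_n := Dcut W S - Duncut W S.

Definition tau (U : 'M[R]_n) A : R := \sum_(a in A) \sum_(b in ~: A) U a b.
Definition mu (U : 'M[R]_n) A : R := \sum_(a in A) \sum_v U a v.

(* The initial
   value 1 of the iterated min is harmless: every ratio is <= 1 whenever the
   denominators are positive (tau <= mu), and for n <= 1 there is no proper
   nonempty subset. *)
Definition cheeger (U : 'M[R]_n) : R :=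
  \big[Num.min/1]_(A : {set 'I_n} | (A != set0) && (A != setT))
     (tau U A / Num.min (mu U A) (mu U (~: A))).

Definition psd (M : 'M[R]_n) : Prop :=
  forall v : 'cV[R]_n, 0 <= (v^T *m M *m v) 0 0.

End Defs.

(* Put u := s x, where s is the +-1 sign vector of the cut.  Then
   2 x^T (W + D') x = E_cut(u) - E_uncut(u) with E_U(u) = sum_ij U_ij (u_i - u_j)^2.
   Cheeger's inequality for w_cut (a discrete co-area formula plus Cauchy-Schwarz,
   applied on both sides of a weighted median c) gives
   E_cut(u) >= 2 lambda sum_i xi(i) (u_i - c)^2 with lambda = 1 - sqrt(1 - h^2),
   whereas E_uncut(u) <= 4 sum_i iota(i) (u_i - c)^2 <= (4/gamma) sum_i xi(i) (u_i - c)^2.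
   As gamma lambda > 2 the form is nonnegative.  Maximality of the cut and
   connectivity force h > 0 and xi(i) > 0, so the form vanishes only when u is
   constant: the kernel is spanned by s. *)

From HB Require Import structures.
From mathcomp Require Import all_boot all_order all_algebra.
From mathcomp Require Import ring lra zify.
Set Implicit Arguments. Unset Strict Implicit. Unset Printing Implicit Defensive.
Import Order.TTheory GRing.Theory Num.Theory.
Local Open Scope ring_scope.

Section QuadraticForms.
Variables (R : comPzRingType) (n : nat).

Definition qform (A : 'M[R]_n) (x : 'I_n -> R) : R := \sum_i \sum_j x i * A i j * x j.

Lemma mulmx_qformE (A : 'M[R]_n) (v : 'cV[R]_n) :
  (v^T *m A *m v) 0 0 = qform A (fun i => v i 0).
Proof.
rewrite mxE; under eq_bigr => j _ do rewrite mxE mulr_suml.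
by rewrite exchange_big; apply: eq_bigr => i _; apply: eq_bigr => j _; rewrite !mxE.
Qed.

Lemma sum_delta (i : 'I_n) (F : 'I_n -> R) : \sum_j (i == j)%:R * F j = F i.
Proof.
rewrite (bigD1 i) //= eqxx mul1r big1 ?addr0 // => j ji.
by rewrite eq_sym (negbTE ji) mul0r.
Qed.

End QuadraticForms.

Section DoubleSums.
Variables (R : realDomainType) (n : nat).
Implicit Types (F G H : 'I_n -> 'I_n -> R).

Lemma sum2_ge0 F : (forall i j, 0 <= F i j) -> 0 <= \sum_i \sum_j F i j.
Proof. by move=> F_ge0; apply: sumr_ge0 => i _; apply: sumr_ge0. Qed.

Lemma sum2_eq0 F : (forall i j, 0 <= F i j) ->
  \sum_i \sum_j F i j = 0 -> forall i j, F i j = 0.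
Proof.
move=> F_ge0 F0 i j.
have Fi0 : \sum_j F i j = 0.
  by apply: (psumr_eq0P _ F0) => // k _; apply: sumr_ge0.
exact: (psumr_eq0P _ Fi0).
Qed.

Lemma sum2_lin3 (a b c : R) F G H :
  \sum_i \sum_j (a * F i j + b * G i j + c * H i j) =
  a * (\sum_i \sum_j F i j) + b * (\sum_i \sum_j G i j) + c * (\sum_i \sum_j H i j).
Proof.
rewrite !mulr_sumr -!big_split /=; apply: eq_bigr => i _.
by rewrite !mulr_sumr -!big_split.
Qed.

Lemma cauchy_schwarz_sum2 (w x y : 'I_n -> 'I_n -> R) : (forall i j, 0 <= w i j) ->
  (\sum_i \sum_j w i j * (x i j * y i j)) ^+ 2 <=
  (\sum_i \sum_j w i j * x i j ^+ 2) * (\sum_i \sum_j w i j * y i j ^+ 2).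
Proof.
move=> w_ge0.
set X := \sum_i \sum_j w i j * x i j ^+ 2; set Y := \sum_i \sum_j w i j * y i j ^+ 2.
set Z := \sum_i \sum_j w i j * (x i j * y i j).
have wx2_ge0 i j : 0 <= w i j * x i j ^+ 2 by rewrite mulr_ge0 ?sqr_ge0.
have [X0 | X_neq0] := eqVneq X 0.
  suff -> : Z = 0 by rewrite X0 expr0n mul0r.
  apply: big1 => i _; apply: big1 => j _; apply/eqP; rewrite -sqrf_eq0.
  have -> : (w i j * (x i j * y i j)) ^+ 2 =
    (w i j * x i j ^+ 2) * (w i j * y i j ^+ 2) by ring.
  by rewrite (sum2_eq0 wx2_ge0 X0) mul0r.
have X_gt0 : 0 < X by rewrite lt0r X_neq0 sum2_ge0.
(* X (X Y - Z^2) is the weighted sum of the squares (Z x - X y)^2. *)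
have : 0 <= X * (X * Y - Z ^+ 2).
  have -> : X * (X * Y - Z ^+ 2) =
      \sum_i \sum_j (Z ^+ 2 * (w i j * x i j ^+ 2)
                    + (- (2 * Z * X)) * (w i j * (x i j * y i j))
                    + X ^+ 2 * (w i j * y i j ^+ 2)).
    by rewrite sum2_lin3 -/X -/Y -/Z; ring.
  apply: sum2_ge0 => i j.
  have -> : Z ^+ 2 * (w i j * x i j ^+ 2) + - (2 * Z * X) * (w i j * (x i j * y i j))
      + X ^+ 2 * (w i j * y i j ^+ 2) = w i j * (x i j * Z - y i j * X) ^+ 2 by ring.
  by rewrite mulr_ge0 ?sqr_ge0.
by rewrite pmulr_rge0 // subr_ge0.
Qed.

End DoubleSums.

Lemma sqrt_gap_le (R : rcfType) (h a b : R) : 0 <= b -> h ^+ 2 <= 1 ->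
  (2 * h * b) ^+ 2 <= a * (4 * b - a) -> 2 * (1 - Num.sqrt (1 - h ^+ 2)) * b <= a.
Proof.
move=> b_ge0 h2_le1 hab; set s := Num.sqrt _.
have s_ge0 : 0 <= s := sqrtr_ge0 _.
have s2 : s ^+ 2 = 1 - h ^+ 2 by rewrite sqr_sqrtr // subr_ge0.
(* a lies between the roots 2 b (1 - s) and 2 b (1 + s) of X^2 - 4 b X + 4 h^2 b^2 *)
rewrite leNgt; apply/negP => a_lt.
have : 0 < (2 * b - a - 2 * s * b) * (2 * b - a + 2 * s * b).
  by apply: mulr_gt0; nra.
have -> : (2 * b - a - 2 * s * b) * (2 * b - a + 2 * s * b) =
  (2 * b - a) ^+ 2 - 4 * s ^+ 2 * b ^+ 2 by ring.
rewrite s2; move: hab; rewrite !exprMn.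
lra.
Qed.

Section Weights.
Variables (R : rcfType) (n : nat) (U : 'M[R]_n).
Hypotheses (U_sym : forall i j, U i j = U j i) (U_ge0 : forall i j, 0 <= U i j).
Implicit Types (A B : {set 'I_n}) (f g u : 'I_n -> R).

Definition deg i : R := \sum_j U i j.

Definition dirichlet u : R := \sum_i \sum_j U i j * (u i - u j) ^+ 2.

(* Cheeger's lower bound on the spectral gap of the normalized Laplacian of U. *)
Definition cheeger_gap : R := 1 - Num.sqrt (1 - cheeger U ^+ 2).

Lemma deg_ge0 i : 0 <= deg i.
Proof. exact: sumr_ge0. Qed.

Lemma sum2_degl f : \sum_i \sum_j U i j * f i = \sum_i deg i * f i.
Proof. by apply: eq_bigr => i _; rewrite mulr_suml. Qed.

Lemma sum2_degr f : \sum_i \sum_j U i j * f j = \sum_i deg i * f i.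
Proof.
rewrite exchange_big /=; apply: eq_bigr => i _; rewrite mulr_suml.
by apply: eq_bigr => j _; rewrite U_sym.
Qed.

Lemma muE A : mu U A = \sum_i (i \in A)%:R * deg i.
Proof.
rewrite /mu big_mkcond; apply: eq_bigr => i _.
by case: (i \in A); rewrite ?mul1r ?mul0r.
Qed.

Lemma mu_ge0 A : 0 <= mu U A.
Proof. by rewrite muE sumr_ge0 // => i _; rewrite mulr_ge0 ?deg_ge0. Qed.

Lemma mu_set0 : mu U set0 = 0.
Proof. by rewrite /mu big_set0. Qed.

Lemma mu_setC A : mu U A + mu U (~: A) = mu U setT.
Proof.
rewrite !muE -big_split /=; apply: eq_bigr => i _; rewrite in_setC in_setT.
by case: (i \in A); rewrite /= ?mul1r ?mul0r ?addr0 ?add0r.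
Qed.

Lemma mu_subset A B : A \subset B -> mu U A <= mu U B.
Proof.
move=> /subsetP AB; rewrite !muE; apply: ler_sum => i _.
rewrite ler_wpM2r ?deg_ge0 //.
by case iA: (i \in A); rewrite ?ler0n // (AB _ iA).
Qed.

Lemma crosses_sym A i j : crosses A i j = crosses A j i.
Proof. by rewrite /crosses eq_sym. Qed.

Lemma crosses_setC A i j : crosses (~: A) i j = crosses A i j.
Proof. by rewrite /crosses !in_setC; case: (i \in A); case: (j \in A). Qed.

Lemma tauE A : 2 * tau U A = \sum_i \sum_j (crosses A i j)%:R * U i j.
Proof.
have tauE1 : tau U A = \sum_i \sum_j (i \in A)%:R * (j \notin A)%:R * U i j.
  rewrite /tau big_mkcond; apply: eq_bigr => i _.
  case: (i \in A); last by rewrite big1 // => j _; rewrite !mul0r.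
  rewrite big_mkcond; apply: eq_bigr => j _; rewrite in_setC.
  by case: (j \in A); rewrite ?mul1r ?mul0r.
have tauE2 : tau U A = \sum_i \sum_j (i \notin A)%:R * (j \in A)%:R * U i j.
  rewrite tauE1 exchange_big /=; apply: eq_bigr => i _; apply: eq_bigr => j _.
  by rewrite U_sym; ring.
rewrite mulr2n mulrDl mul1r {1}tauE1 tauE2 -big_split /=; apply: eq_bigr => i _.
rewrite -big_split /=; apply: eq_bigr => j _; rewrite -mulrDl /crosses.
by case: (i \in A); case: (j \in A); rewrite /=; ring.
Qed.

Lemma tau_ge0 A : 0 <= tau U A.
Proof.
rewrite -(pmulr_rge0 _ (ltr0Sn _ 1)) tauE.
by apply: sum2_ge0 => i j; rewrite mulr_ge0 ?ler0n.
Qed.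

Lemma tau_setC A : tau U (~: A) = tau U A.
Proof.
apply: (@mulfI _ 2); first by rewrite pnatr_eq0.
rewrite !tauE.
by apply: eq_bigr => i _; apply: eq_bigr => j _; rewrite crosses_setC.
Qed.

Lemma tau_le_mu A : tau U A <= mu U A.
Proof.
apply: ler_sum => i _; rewrite [leRHS](bigID (mem (~: A))) /= lerDl.
exact: sumr_ge0.
Qed.

Lemma cheeger_ge0 : 0 <= cheeger U.
Proof.
rewrite /cheeger; elim/big_rec: _ => // A x _ x_ge0.
by rewrite le_min x_ge0 andbT divr_ge0 ?tau_ge0 // le_min !mu_ge0.
Qed.

(* The initial value 1 of the iterated min caps the Cheeger constant. *)
Lemma cheeger_le1 : cheeger U <= 1.
Proof. by rewrite /cheeger; elim/big_rec: _ => // A x _ x_le1; rewrite ge_min x_le1 orbT. Qed.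

Lemma cheeger_mu_le_tau A : A != set0 -> 2 * mu U A <= mu U setT ->
  cheeger U * mu U A <= tau U A.
Proof.
move=> A0 A_half; have [AT | AT] := eqVneq A setT.
  have muT0 : mu U setT = 0 by move: A_half; rewrite AT; have := mu_ge0 setT; lra.
  by rewrite AT muT0 mulr0 tau_ge0.
have muC := mu_setC A; have muA_ge0 := mu_ge0 A.
have [-> | muA0] := eqVneq (mu U A) 0; first by rewrite mulr0 tau_ge0.
have muA_gt0 : 0 < mu U A by rewrite lt0r muA0.
have -> : mu U A = Num.min (mu U A) (mu U (~: A)) by apply/esym/min_idPl; lra.
rewrite -ler_pdivlMr; last by rewrite lt_min; apply/andP; split; lra.
by rewrite /cheeger (bigD1 A) /= ?A0 ?AT // ge_min lexx.
Qed.

Lemma sum_deg_layer f g A (m : R) : (forall i, f i = g i + m * (i \in A)%:R) ->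
  \sum_i deg i * f i = m * mu U A + \sum_i deg i * g i.
Proof.
move=> fE; rewrite muE mulr_sumr -big_split /=.
by apply: eq_bigr => i _; rewrite fE; ring.
Qed.

Lemma sum2_abs_layer f g A (m : R) : 0 <= m ->
  (forall i, f i = g i + m * (i \in A)%:R) ->
  (forall i, i \in A -> 0 <= g i) -> (forall i, i \notin A -> g i = 0) ->
  \sum_i \sum_j U i j * `|f i - f j| =
  m * (2 * tau U A) + \sum_i \sum_j U i j * `|g i - g j|.
Proof.
move=> m_ge0 fE g_ge0 g_off; rewrite tauE mulr_sumr -big_split /=.
apply: eq_bigr => i _; rewrite mulr_sumr -big_split /=; apply: eq_bigr => j _.
rewrite !fE /crosses; case iA: (i \in A); case jA: (j \in A);
  rewrite /= ?(mulr1, mulr0, mul0r, addr0, add0r).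
- by congr (_ * `|_|); ring.
- rewrite (g_off j) ?jA // !subr0 !ger0_norm ?addr_ge0 ?g_ge0 //; ring.
- rewrite (g_off i) ?iA // !sub0r !normrN !ger0_norm ?addr_ge0 ?g_ge0 //; ring.
- by [].
Qed.

(* Discrete co-area inequality: peel off the lowest level set of f, induct on the support. *)
Lemma coarea f : (forall i, 0 <= f i) -> 2 * mu U [set i | 0 < f i] <= mu U setT ->
  2 * cheeger U * \sum_i deg i * f i <= \sum_i \sum_j U i j * `|f i - f j|.
Proof.
have [k] := ubnP #|[set i | 0 < f i]|; elim: k f => // k IHk f supp_lt f_ge0 A_half.
set A := [set i | 0 < f i] in supp_lt A_half.
have f_off i : i \notin A -> f i = 0.
  by rewrite inE -leNgt => fi_le0; apply/eqP; rewrite eq_le fi_le0 f_ge0.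
have rhs_ge0 : 0 <= \sum_i \sum_j U i j * `|f i - f j|.
  by apply: sum2_ge0 => i j; rewrite mulr_ge0.
have [A0 | A_neq0] := eqVneq A set0.
  by rewrite big1 ?mulr0 // => i _; rewrite f_off ?A0 ?inE ?mulr0.
have [i0 i0A] := set0Pn _ A_neq0.
have [im imA im_min] := arg_minP (P := mem A) f i0A.
set m := f im in im_min.
have {}imA : im \in A := imA.
have m_gt0 : 0 < m by move: imA; rewrite inE.
pose g i := f i - m * (i \in A)%:R.
have fE i : f i = g i + m * (i \in A)%:R by rewrite subrK.
have g_off i : i \notin A -> g i = 0 by move=> iA; rewrite /g (negbTE iA) f_off // mulr0 subr0.
have g_on i : i \in A -> 0 <= g i by move=> iA; rewrite /g iA mulr1 subr_ge0 im_min.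
have g_ge0 i : 0 <= g i by case iA: (i \in A); [exact: g_on | rewrite g_off ?iA].
have supp_g : [set i | 0 < g i] \proper A.
  apply/properP; split.
    by apply/subsetP => i; rewrite inE; apply: contraLR => /g_off ->; rewrite ltxx.
  by exists im; rewrite // inE /g imA mulr1 subrr ltxx.
rewrite (sum_deg_layer fE) (sum2_abs_layer (ltW m_gt0) fE g_on g_off) mulrDr.
apply: lerD.
  have := cheeger_mu_le_tau A_neq0 A_half; have := cheeger_ge0; nra.
apply: IHk => //; first exact: leq_trans (proper_card supp_g) supp_lt.
by apply: le_trans A_half; rewrite ler_pM2l // mu_subset // proper_sub.
Qed.

Lemma sum2_sqrD g :
  \sum_i \sum_j U i j * (g i + g j) ^+ 2 = 4 * \sum_i deg i * g i ^+ 2 - dirichlet g.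
Proof.
transitivity (\sum_i \sum_j (2 * (U i j * g i ^+ 2) + 2 * (U i j * g j ^+ 2)
                            + (-1) * (U i j * (g i - g j) ^+ 2))).
  by apply: eq_bigr => i _; apply: eq_bigr => j _; ring.
by rewrite sum2_lin3 sum2_degl sum2_degr; rewrite /dirichlet; ring.
Qed.

Lemma dirichlet_le_deg u c : dirichlet u <= 4 * \sum_i deg i * (u i - c) ^+ 2.
Proof.
set V := \sum_i deg i * (u i - c) ^+ 2.
rewrite (_ : 4 * V = 2 * V + 2 * V); last by ring.
rewrite {1}/V -sum2_degl /V -sum2_degr !mulr_sumr -big_split /=.
apply: ler_sum => i _; rewrite !mulr_sumr -big_split /=; apply: ler_sum => j _.
have := mulr_ge0 (U_ge0 i j) (sqr_ge0 (u i + u j - 2 * c)); nra.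
Qed.

Lemma cheeger_inequality_half g : (forall i, 0 <= g i) ->
  2 * mu U [set i | 0 < g i] <= mu U setT ->
  2 * cheeger_gap * \sum_i deg i * g i ^+ 2 <= dirichlet g.
Proof.
move=> g_ge0 g_half; set B := \sum_i deg i * g i ^+ 2.
have B_ge0 : 0 <= B by apply: sumr_ge0 => i _; rewrite mulr_ge0 ?deg_ge0 ?sqr_ge0.
set Z := \sum_i \sum_j U i j * (`|g i - g j| * `|g i + g j|).
have hB_le : 2 * cheeger U * B <= Z.
  have supp2 : [set i | 0 < g i ^+ 2] = [set i | 0 < g i].
    by apply/setP => i; rewrite !inE exprn_even_gt0 //= lt0r g_ge0 andbT.
  rewrite -supp2 in g_half.
  have := coarea (f := fun i => g i ^+ 2) (fun i => sqr_ge0 _) g_half.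
  congr (_ <= _); apply: eq_bigr => i _; apply: eq_bigr => j _.
  by rewrite -normrM; congr (_ * `|_|); ring.
have Z2_le : Z ^+ 2 <= dirichlet g * (4 * B - dirichlet g).
  have normK (F : 'I_n -> 'I_n -> R) :
      \sum_i \sum_j U i j * `|F i j| ^+ 2 = \sum_i \sum_j U i j * F i j ^+ 2.
    by apply: eq_bigr => i _; apply: eq_bigr => j _; rewrite real_normK ?num_real.
  have := cauchy_schwarz_sum2 (fun i j => `|g i - g j|) (fun i j => `|g i + g j|) U_ge0.
  by rewrite /= (normK (fun i j => g i - g j)) (normK (fun i j => g i + g j)) sum2_sqrD.
apply: sqrt_gap_le => //.
  by rewrite exprn_ile1 ?cheeger_ge0 ?cheeger_le1.
have hB_ge0 : 0 <= 2 * cheeger U * B by rewrite !mulr_ge0 ?cheeger_ge0.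
by apply: le_trans Z2_le; rewrite ler_sqr ?nnegrE ?(le_trans hB_ge0 hB_le).
Qed.

Lemma exists_weighted_median u : exists c,
  2 * mu U [set i | c < u i] <= mu U setT /\ 2 * mu U [set i | u i < c] <= mu U setT.
Proof.
have muT_ge0 := mu_ge0 setT.
have [i0 _ | no_index] := pickP (@predT 'I_n); last first.
  by exists 0; rewrite /mu !big_pred0 ?mulr0 // => i; move: (no_index i).
pose upper_light k := 2 * mu U [set i | u k < u i] <= mu U setT.
have [kmax _ kmax_max] := arg_maxP (P := predT) u (isT : predT i0).
have upper_light_kmax : upper_light kmax.
  rewrite /upper_light (_ : [set i | _] = set0) ?mu_set0 ?mulr0 //.
  by apply/setP => i; rewrite !inE; apply/negbTE; rewrite -leNgt; exact: kmax_max.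
have [k k_light k_min] := arg_minP (P := upper_light) u upper_light_kmax.
exists (u k); split => //; rewrite leNgt; apply/negP => lower_heavy.
set L := [set i | u i < u k] in lower_heavy.
have [L0 | /set0Pn [j0 j0L]] := eqVneq L set0.
  by move: lower_heavy; rewrite L0 mu_set0 mulr0 ltNge muT_ge0.
have [k' k'L k'_max] := arg_maxP (P := mem L) u j0L.
have {}k'L : k' \in L := k'L.
have uk'_lt : u k' < u k by move: k'L; rewrite inE.
suff : upper_light k' by move/k_min; rewrite leNgt uk'_lt.
rewrite /upper_light (_ : [set i | u k' < u i] = ~: L).
  by have := mu_setC L; lra.
apply/setP => i; rewrite !inE; have [ui_lt | uk_le] := ltP (u i) (u k).
  have iL : i \in L by rewrite inE.
  by apply/negbTE; rewrite -leNgt; exact: k'_max iL.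
exact: lt_le_trans uk'_lt uk_le.
Qed.

Lemma cheeger_inequality u : exists c,
  2 * cheeger_gap * \sum_i deg i * (u i - c) ^+ 2 <= dirichlet u.
Proof.
have [c [upper_half lower_half]] := exists_weighted_median u; exists c.
pose p i := if c < u i then u i - c else 0.
pose q i := if u i < c then c - u i else 0.
have p_ge0 i : 0 <= p i by rewrite /p; case: ifP => // /ltW; rewrite subr_ge0.
have q_ge0 i : 0 <= q i by rewrite /q; case: ifP => // /ltW; rewrite subr_ge0.
have supp_p : [set i | 0 < p i] = [set i | c < u i].
  by apply/setP => i; rewrite !inE /p; case: ifP => ci; rewrite ?subr_gt0 ?ltxx.
have supp_q : [set i | 0 < q i] = [set i | u i < c].
  by apply/setP => i; rewrite !inE /q; case: ifP => ci; rewrite ?subr_gt0 ?ltxx.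
have sq_split i : (u i - c) ^+ 2 = p i ^+ 2 + q i ^+ 2.
  by rewrite /p /q; case: (ltgtP (u i) c) => ci; nra.
have dirichlet_split : dirichlet p + dirichlet q <= dirichlet u.
  rewrite /dirichlet -big_split /=; apply: ler_sum => i _.
  rewrite -big_split /=; apply: ler_sum => j _; rewrite -mulrDr ler_wpM2l //.
  by rewrite /p /q; case: (ltgtP (u i) c) => ci; case: (ltgtP (u j) c) => cj; nra.
apply: le_trans dirichlet_split.
under eq_bigr do rewrite sq_split mulrDr.
rewrite big_split /= mulrDr.
apply: lerD; apply: cheeger_inequality_half => //; by rewrite ?supp_p ?supp_q.
Qed.
End Weights.

Section MaxCut.
Variables (R : rcfType) (n : nat) (W : 'M[R]_n) (S : {set 'I_n}).
Hypotheses (W_sym : forall i j, W i j = W j i) (W_ge0 : forall i j, 0 <= W i j).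
Hypothesis W_conn : forall i j, connect (fun a b => 0 < W a b) i j.
Hypothesis S_max : is_max_cut W S.
Implicit Types (A : {set 'I_n}) (x : 'I_n -> R).

Local Notation Wc := (Wcut W S).
Local Notation Wu := (Wuncut W S).

Lemma WcutE i j : Wc i j = if crosses S i j then W i j else 0.
Proof. by rewrite mxE. Qed.

Lemma WuncutE i j : Wu i j = if crosses S i j then 0 else W i j.
Proof. by rewrite !mxE; case: ifP; rewrite ?subrr ?subr0. Qed.

Lemma Wcut_sym i j : Wc i j = Wc j i.
Proof. by rewrite !WcutE crosses_sym W_sym. Qed.

Lemma Wuncut_sym i j : Wu i j = Wu j i.
Proof. by rewrite !WuncutE crosses_sym W_sym. Qed.

Lemma Wcut_ge0 i j : 0 <= Wc i j.
Proof. by rewrite WcutE; case: ifP. Qed.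

Lemma Wuncut_ge0 i j : 0 <= Wu i j.
Proof. by rewrite WuncutE; case: ifP. Qed.

Lemma tau_cut_uncut A : tau W A = tau Wc A + tau Wu A.
Proof.
rewrite /tau -big_split /=; apply: eq_bigr => a _; rewrite -big_split /=.
by apply: eq_bigr => b _; rewrite /Wuncut !mxE; ring.
Qed.

Lemma cut_value_flip A :
  cut_value W [set x | (x \in S) != (x \in A)] = cut_value W S + tau Wu A - tau Wc A.
Proof.
apply: (@mulfI _ 2); first by rewrite pnatr_eq0.
rewrite /cut_value -!/(tau W _) mulrBr mulrDr.
rewrite !(tauE W_sym) (tauE Wcut_sym) (tauE Wuncut_sym) -big_split -sumrB /=.
apply: eq_bigr => i _; rewrite -big_split -sumrB /=; apply: eq_bigr => j _.
rewrite WcutE WuncutE /crosses !inE.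
by case: (i \in S); case: (i \in A); case: (j \in S); case: (j \in A); rewrite /=; ring.
Qed.

Lemma max_cut_tau_uncut_le A : tau Wu A <= tau Wc A.
Proof. by have := S_max [set x | (x \in S) != (x \in A)]; rewrite cut_value_flip; lra. Qed.

Lemma connected_tau_gt0 A : A != set0 -> A != setT -> 0 < tau W A.
Proof.
move=> /set0Pn [a aA] /negP AT.
have [[x y] /and3P [/= xA yA Wxy] | no_edge] :=
  pickP (fun p : 'I_n * 'I_n => [&& p.1 \in A, p.2 \notin A & 0 < W p.1 p.2]).
  rewrite /tau (bigD1 x) //= (bigD1 y) ?inE //= -addrA.
  by rewrite ltr_pwDl // addr_ge0 ?sumr_ge0 // => i _; rewrite sumr_ge0.
have A_closed : closed (fun a b => 0 < W a b) A.
  move=> u v Wuv; case uA: (u \in A); case vA: (v \in A) => //.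
    by have := no_edge (u, v); rewrite /= uA vA Wuv.
  by have := no_edge (v, u); rewrite /= uA vA W_sym Wuv.
case: AT; apply/eqP/setP => b; rewrite inE.
by rewrite -(closed_connect A_closed (W_conn a b)).
Qed.

Lemma tau_cut_gt0 A : A != set0 -> A != setT -> 0 < tau Wc A.
Proof.
move=> A0 AT; have := connected_tau_gt0 A0 AT; rewrite tau_cut_uncut.
by have := max_cut_tau_uncut_le A; lra.
Qed.

Lemma cheeger_cut_gt0 : 0 < cheeger Wc.
Proof.
rewrite /cheeger; elim/big_rec: _ => // A h /andP [A0 AT] h_gt0.
have tauA_gt0 := tau_cut_gt0 A0 AT.
have tauA_le := tau_le_mu Wcut_ge0 A.
have tauC_le := tau_le_mu Wcut_ge0 (~: A); rewrite (tau_setC Wcut_sym) in tauC_le.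
by rewrite lt_min h_gt0 andbT divr_gt0 // lt_min !(lt_le_trans tauA_gt0).
Qed.

Lemma xi_gt0 i j : i != j -> 0 < xi W S i.
Proof.
move=> ij; have i_set0 : [set i] != set0 by apply/set0Pn; exists i; rewrite inE.
have i_setT : [set i] != setT.
  by apply/negP => /eqP iT; move: ij; rewrite eq_sym -in_set1 iT inE.
apply: (lt_le_trans (tau_cut_gt0 i_set0 i_setT)).
by rewrite (le_trans (tau_le_mu Wcut_ge0 _)) // /mu big_set1.
Qed.

Definition cut_sign i : R := if i \in S then 1 else -1.

Lemma cut_sign_sqr i : cut_sign i * cut_sign i = 1.
Proof. by rewrite /cut_sign; case: ifP; rewrite ?mulr1 ?mulrNN ?mulr1. Qed.

Local Notation M := (W + Dprime W S).

Lemma Dprime_addE i j : M i j = W i j + (i == j)%:R * (xi W S i - iota_w W S i).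
Proof.
rewrite !mxE /xi /iota_w.
by case: (i == j); rewrite ?mulr1n ?mulr0n ?mul1r ?mul0r ?subrr.
Qed.

Lemma qform_dirichlet x : 2 * qform M x =
  dirichlet Wc (fun i => cut_sign i * x i) - dirichlet Wu (fun i => cut_sign i * x i).
Proof.
pose E := Wc - Wu.
have EE i j : E i j = Wc i j - Wu i j by rewrite !mxE.
have E_sym i j : E i j = E j i by rewrite !EE Wcut_sym Wuncut_sym.
have degE i : deg E i = xi W S i - iota_w W S i.
  by rewrite /deg /xi /iota_w -sumrB; apply: eq_bigr => j _; rewrite EE.
have -> : qform M x = \sum_i \sum_j W i j * (x i * x j) + \sum_i deg E i * x i ^+ 2.
  rewrite /qform -big_split /=; apply: eq_bigr => i _.
  transitivity (\sum_j (W i j * (x i * x j) + (i == j)%:R * (deg E i * x i * x j))).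
    by apply: eq_bigr => j _; rewrite Dprime_addE -degE; ring.
  by rewrite big_split /= sum_delta; congr (_ + _); ring.
transitivity (\sum_i \sum_j
  (1 * (E i j * x i ^+ 2) + 1 * (E i j * x j ^+ 2) + 2 * (W i j * (x i * x j)))).
  by rewrite sum2_lin3 (sum2_degl E) (sum2_degr E_sym); ring.
rewrite /dirichlet -sumrB; apply: eq_bigr => i _; rewrite -sumrB; apply: eq_bigr => j _.
rewrite EE WcutE WuncutE /cut_sign /crosses.
by case: (i \in S); case: (j \in S); rewrite /=; ring.
Qed.

Variable gamma : R.
Hypothesis xi_ge : forall i, gamma * iota_w W S i <= xi W S i.
Hypothesis gamma_gt : 2 / cheeger_gap Wc < gamma.

Lemma cheeger_gap_cut_gt0 : 0 < cheeger_gap Wc.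
Proof.
rewrite subr_gt0 -[X in _ < X]sqrtr1 ltr_sqrt ?ltr01 //.
by rewrite gtrDl oppr_lt0 exprn_gt0 ?cheeger_cut_gt0.
Qed.

Lemma gamma_gap_gt2 : 2 < gamma * cheeger_gap Wc.
Proof. by rewrite -ltr_pdivrMr ?cheeger_gap_cut_gt0. Qed.

Lemma gamma_gt0 : 0 < gamma.
Proof.
have := gamma_gap_gt2; rewrite -(pmulr_lgt0 _ cheeger_gap_cut_gt0).
exact/lt_trans/ltr0Sn.
Qed.

Lemma qform_lower_bound x : exists c,
  (gamma * cheeger_gap Wc - 2) * \sum_i xi W S i * (cut_sign i * x i - c) ^+ 2
    <= gamma * qform M x.
Proof.
pose u i := cut_sign i * x i.
have [c cut_ge] := cheeger_inequality Wcut_sym Wcut_ge0 u; exists c.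
set P := \sum_i deg Wc i * (u i - c) ^+ 2 in cut_ge.
set I := \sum_i deg Wu i * (u i - c) ^+ 2.
have uncut_le : dirichlet Wu u <= 4 * I := dirichlet_le_deg Wuncut_sym Wuncut_ge0 u c.
have gammaI_le : gamma * I <= P.
  rewrite /I mulr_sumr; apply: ler_sum => i _.
  by rewrite mulrA ler_wpM2r ?sqr_ge0 ?xi_ge.
have := qform_dirichlet x; rewrite -/u => Q2.
have := ler_wpM2l (ltW gamma_gt0) (lerB cut_ge uncut_le); rewrite -Q2.
have -> : \sum_i xi W S i * (cut_sign i * x i - c) ^+ 2 = P by [].
lra.
Qed.

Lemma qform_ge0 x : 0 <= qform M x.
Proof.
have [c bound] := qform_lower_bound x.
rewrite -(pmulr_rge0 _ gamma_gt0) (le_trans _ bound) //.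
rewrite mulr_ge0 ?subr_ge0 ?(ltW gamma_gap_gt2) //.
by apply: sumr_ge0 => i _; rewrite mulr_ge0 ?sqr_ge0 ?(deg_ge0 Wcut_ge0).
Qed.

Lemma qform_eq0 x : qform M x = 0 ->
  forall i j, cut_sign i * x i = cut_sign j * x j.
Proof.
move=> Q0; have [c] := qform_lower_bound x.
rewrite Q0 mulr0 pmulr_rle0 ?subr_gt0 ?gamma_gap_gt2 // => P_le0.
have term_ge0 i : 0 <= xi W S i * (cut_sign i * x i - c) ^+ 2.
  by rewrite mulr_ge0 ?sqr_ge0 ?(deg_ge0 Wcut_ge0).
have P0 : \sum_i xi W S i * (cut_sign i * x i - c) ^+ 2 = 0.
  by apply/eqP; rewrite eq_le P_le0 sumr_ge0.
have at_c i j : i != j -> cut_sign i * x i = c.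
  move=> ij; apply/eqP; rewrite -subr_eq0 -sqrf_eq0.
  have := @psumr_eq0P _ _ _ _ (fun i _ => term_ge0 i) P0 i isT.
  by move/eqP; rewrite mulf_eq0 (gt_eqF (xi_gt0 ij)).
move=> i j; have [-> // | ij] := eqVneq i j.
by rewrite (at_c i j) // (at_c j i) // eq_sym.
Qed.

Lemma cut_sign_mulmx : (\row_i cut_sign i) *m M = 0.
Proof.
apply/rowP => j; rewrite !mxE.
transitivity (\sum_i (cut_sign i * W i j
                     + (j == i)%:R * (cut_sign i * (xi W S i - iota_w W S i)))).
  by apply: eq_bigr => i _; rewrite mxE Dprime_addE eq_sym; ring.
rewrite big_split /= sum_delta /xi /iota_w -sumrB mulr_sumr -big_split /= big1 // => i _.
rewrite Wcut_sym Wuncut_sym WcutE WuncutE /crosses /cut_sign.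
by case: (i \in S); case: (j \in S); rewrite /=; ring.
Qed.

Lemma kermx_cut_sign : (kermx M == \row_i cut_sign i)%MS.
Proof.
apply/andP; split; last by rewrite sub_kermx cut_sign_mulmx.
apply/row_subP => k; apply/sub_rVP.
have rM : row k (kermx M) *m M = 0 by rewrite -row_mul mulmx_ker row0.
have := mulmx_qformE M (row k (kermx M))^T.
rewrite trmxK rM mul0mx mxE => /esym/qform_eq0 same_sign.
exists (cut_sign k * row k (kermx M) 0 k); apply/rowP => i.
have := same_sign i k; rewrite !mxE => <-.
by rewrite mulrAC cut_sign_sqr mul1r.
Qed.

End MaxCut.

Lemma mxrank_ker_rV (F : fieldType) (n : nat) (A : 'M[F]_n) (v : 'rV[F]_n) :
  v != 0 -> (kermx A == v)%MS -> \rank A = n.-1.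
Proof.
move=> v_neq0 ker_v; have := eqmx_rank ker_v.
rewrite mxrank_ker rank_rV v_neq0.
by have := rank_leq_col A; lia.
Qed.

Theorem lemma2 (R : rcfType) (n : nat) (W : 'M[R]_n) (S : {set 'I_n}) (gamma : R) :
  maxcut_instance W ->
  is_max_cut W S ->
  (forall x, gamma * iota_w W S x <= xi W S x) ->
  2 / (1 - Num.sqrt (1 - cheeger (Wcut W S) ^+ 2)) < gamma ->
  psd (W + Dprime W S) /\ \rank (W + Dprime W S)%R = n.-1.
Proof.
move=> [W_sym W_ge0 _ W_conn] S_max xi_ge gamma_gt; split.
  by move=> v; rewrite mulmx_qformE (qform_ge0 W_sym W_ge0 W_conn S_max xi_ge gamma_gt).
have [n0 | n_gt0] := posnP n; first by have := rank_leq_col (W + Dprime W S); lia.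
apply: mxrank_ker_rV (kermx_cut_sign W_sym W_ge0 W_conn S_max xi_ge gamma_gt).
apply/rV0Pn; exists (Ordinal n_gt0); rewrite mxE /cut_sign.
by case: ifP; rewrite ?oppr_eq0 oner_eq0.
Qed.
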